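(* Let $D$ be a semi-complete digraph containing $\overleftrightarrow{S_4}$ as a subdigraph. Then $D$ is $3$-dicritical if and only if $D$ is isomorphic to $\vec{W_3}$.
   Context: A digraph is semi-complete if every two distinct vertices are joined by at least one arc. A $2$-dicolouring is a map to $\{1,2\}$ whose colour classes induce acyclic subdigraphs. $D$ is $3$-dicritical if $D$ has no $2$-dicolouring but every proper subdigraph has one. $\overleftrightarrow{S_4}$ is the bidirected star on 4 vertices: a vertex $r$ joined by a digon (both arcs) to each of three other vertices, with no other arcs. $\vec{W_3}$ consists of a directed triangle $a\to b\to c\to a$ and a vertex $r$ joined by a digon to each of $a,b,c$. Subdigraph containment is up to isomorphism. *)

(* A digraph on a finite vertex type T is a loopless arc
   relation E : rel T (E x y = "there is an arc x -> y"); digons are allowed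
   (E x y && E y x), parallel arcs are not. *)
From mathcomp Require Import all_boot.
Set Implicit Arguments. Unset Strict Implicit. Unset Printing Implicit Defensive.

Section Digraphs.
Variable T : finType.

Definition loopless (E : rel T) : Prop := forall x, ~~ E x x.

Definition semicomplete (E : rel T) : Prop :=
  forall x y, x != y -> E x y || E y x.

Definition acyclic_on (F : rel T) (X : {set T}) : Prop :=
  forall s : seq T, s != [::] -> all (fun x => x \in X) s -> ~~ cycle F s.

Definition dicolouring2 (V : {set T}) (F : rel T) (c : T -> bool) : Prop :=
  forall b : bool, acyclic_on F [set x in V | c x == b].

Definition subdigraph (V : {set T}) (F : rel T) (E : rel T) : Prop :=
  forall x y, F x y -> [&& x \in V, y \in V & E x y].

Definition proper_subdigraph (V : {set T}) (F : rel T) (E : rel T) : Prop :=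
  subdigraph V F E /\ (V != setT \/ exists x y, E x y && ~~ F x y).

Definition dicritical3 (E : rel T) : Prop :=
  ~ (exists c, dicolouring2 setT E c) /\
  forall V F, proper_subdigraph V F E -> exists c, dicolouring2 V F c.

(* D contains the bidirected star S_4 as a (not necessarily induced)
   subdigraph: an injective map of {r=0,1,2,3} with digons r<->i *)
Definition contains_S4 (E : rel T) : Prop :=
  exists f : 'I_4 -> T, injective f /\
    forall i : 'I_4, i != ord0 -> E (f ord0) (f i) && E (f i) (f ord0).
End Digraphs.

(* W_3 on vertices 'I_4: r = 0, directed triangle 1 -> 2 -> 3 -> 1,
   digons between 0 and each of 1,2,3 *)
Definition W3 : rel 'I_4 := fun i j =>
  let a := nat_of_ord i in let b := nat_of_ord j in
  ((a == 0) && (b != 0)) || ((b == 0) && (a != 0)) ||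
  ((a == 1) && (b == 2)) || ((a == 2) && (b == 3)) || ((a == 3) && (b == 1)).

Definition iso_W3 (T : finType) (E : rel T) : Prop :=
  exists g : 'I_4 -> T, bijective g /\ forall i j, E (g i) (g j) = W3 i j.

From mathcomp Require Import all_boot.
Set Implicit Arguments. Unset Strict Implicit. Unset Printing Implicit Defensive.

(* Let r be the centre of the bidirected star and a, b, c its leaves.  In a
   2-dicolouring of any digraph containing the three digons at r, the leaves
   get the colour opposite to r, hence all the same colour.  So if D is
   3-dicritical, no two leaves form a digon (that bidirected triangle would be
   a proper subdigraph with no 2-dicolouring), and the leaves do not span a
   transitive triangle s -> m -> t, s -> t: a 2-dicolouring of D - st would
   extend to D, since s -> m -> t can replace s -> t in any monochromatic
   cycle.  By semi-completeness the leaves thus span a directed triangle,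
   {r, a, b, c} induces W3, which has no 2-dicolouring, and criticality forces
   D = W3.  Conversely, 3-dicriticality is invariant under isomorphism, and
   every proper subdigraph of W3 lies in W3 minus one arc, which has an
   explicit 2-dicolouring. *)

Definition digon (T : finType) (E : rel T) (x y : T) : bool := E x y && E y x.

Definition induced (T : finType) (E : rel T) (X : {set T}) : rel T :=
  fun x y => [&& x \in X, y \in X & E x y].

Definition remove_arc (T : finType) (E : rel T) (a b : T) : rel T :=
  fun x y => E x y && ((x, y) != (a, b)).

Section Acyclicity.
Variable T : finType.
Implicit Types (F G : rel T) (X Y : {set T}).

Lemma acyclic_on_sub F G X Y :
  subrel F G -> {subset X <= Y} -> acyclic_on G Y -> acyclic_on F X.
Proof.
move=> FG XY Gacyc s s_nil sX; apply: contraNN (Gacyc s s_nil _).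
  exact: sub_cycle.
by apply/allP=> x /(allP sX)/XY.
Qed.

Lemma acyclic_on_rank F X (rk : T -> nat) :
  (forall x y, x \in X -> y \in X -> F x y -> rk x < rk y) -> acyclic_on F X.
Proof.
move=> Frk [//|x p] _ pX; apply/negP=> Fcyc.
have : cycle (relpre rk ltn) (x :: p).
  by apply: sub_in_cycle pX Fcyc => y z yX zX /Frk; apply.
rewrite -cycle_map /= => /(order_path_min ltn_trans)/allP/(_ (rk x)).
by rewrite mem_rcons mem_head ltnn => /(_ isT).
Qed.

Lemma path_induced F X x p :
  x \in X -> path (induced F X) x p = all (fun z => z \in X) p && path F x p.
Proof.
elim: p x => //= y p IHp x xX; rewrite /induced xX /=.
by case yX: (y \in X); rewrite //= IHp // andbCA.
Qed.

Lemma acyclic_on_connect F X :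
  acyclic_on F X <->
  (forall x y, x \in X -> y \in X -> F x y -> ~~ connect (induced F X) y x).
Proof.
split=> [Facyc x y xX yX Fxy | noback [//|y p] _ /= /andP[yX pX]].
  apply/connectP=> -[p]; rewrite path_induced // => /andP[pX Fp] xl.
  have := Facyc (y :: p) isT; rewrite /= yX pX rcons_path Fp -xl Fxy.
  by move/(_ isT).
rewrite rcons_path; apply/negP=> /andP[Fp Fl].
have xX : last y p \in X by case/predU1P: (mem_last y p) => [-> | /(allP pX)].
case/negP: (noback _ _ xX yX Fl); apply/connectP; exists p => //.
by rewrite path_induced // pX.
Qed.

Lemma acyclic_on_shortcut F G X :
  (forall x y, x \in X -> y \in X -> G x y ->
     F x y \/ exists2 m, m \in X & F x m /\ F m y) ->
  acyclic_on F X -> acyclic_on G X.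
Proof.
move=> GF /acyclic_on_connect Facyc; apply/acyclic_on_connect => x y xX yX Gxy.
have GFconn : subrel (connect (induced G X)) (connect (induced F X)).
  apply: connect_sub => u v /and3P[uX vX /(GF _ _ uX vX)[Fuv | [m mX [Fum Fmv]]]].
    by apply: connect1; rewrite /induced uX vX.
  by apply: (@connect_trans _ _ m); apply: connect1; rewrite /induced ?uX ?vX mX.
have [Fxy | [m mX [Fxm Fmy]]] := GF x y xX yX Gxy.
  by apply: contra (Facyc x y xX yX Fxy); apply: GFconn.
apply: contra (Facyc x m xX mX Fxm) => /GFconn; apply: connect_trans.
by apply: connect1; rewrite /induced mX yX.
Qed.

End Acyclicity.

Section Dicolourings.
Variable T : finType.
Implicit Types (F G : rel T) (V W : {set T}).

Lemma dicolouring2_sub V W F G (c : T -> bool) :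
  {subset V <= W} -> subrel F G -> dicolouring2 W G c -> dicolouring2 V F c.
Proof.
move=> VW FG Gc b; apply: acyclic_on_sub FG _ (Gc b) => x.
by rewrite !inE => /andP[/VW -> ->].
Qed.

Lemma dicolouring2_preim (T' : finType) (g : T' -> T) V F (c : T -> bool) :
  dicolouring2 V F c -> dicolouring2 (g @^-1: V) (relpre g F) (c \o g).
Proof.
move=> Fc b s s_nil sV; rewrite -cycle_map; apply: (Fc b).
  by rewrite -size_eq0 size_map size_eq0.
by rewrite all_map; apply: sub_all sV => x; rewrite !inE; apply.
Qed.

Lemma dicolouring2_induced V F (c : T -> bool) :
  dicolouring2 V (induced F V) c -> dicolouring2 setT (induced F V) c.
Proof.
move=> Fc b s s_nil sb; apply/negP=> Fcyc.
have sV : all (fun x => x \in [set x in V | c x == b]) s.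
  apply/allP=> x xs; have /and3P[xV _ _] := next_cycle Fcyc xs.
  by move: (allP sb x xs); rewrite !inE xV.
by case/negP: (Fc b s s_nil sV).
Qed.

Lemma dicolouring2_rank V F (c : T -> bool) (rk : T -> nat) :
  (forall x y, x \in V -> y \in V -> F x y -> c x = c y -> rk x < rk y) ->
  dicolouring2 V F c.
Proof.
move=> Frk b; apply: (acyclic_on_rank (rk := rk)) => x y.
rewrite !inE => /andP[xV /eqP cx] /andP[yV /eqP cy] Fxy.
by apply: Frk; rewrite ?cx ?cy.
Qed.

Lemma dicolouring2_digon F (c : T -> bool) x y :
  dicolouring2 setT F c -> digon F x y -> c x != c y.
Proof.
move=> Fc /andP[Fxy Fyx]; apply/eqP=> cxy.
by have := Fc (c x) [:: x; y] isT; rewrite /= !inE cxy eqxx Fxy Fyx => /(_ isT).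
Qed.

Lemma dicolouring2_star_leaves F (c : T -> bool) r u v :
  dicolouring2 setT F c -> digon F r u -> digon F r v -> c u = c v.
Proof.
move=> Fc ru rv; move: (dicolouring2_digon Fc ru) (dicolouring2_digon Fc rv).
by case: (c r) (c u) (c v) => [] [] [].
Qed.

Lemma bidirected_triangle_no_dicolouring2 F r u v :
  digon F r u -> digon F r v -> digon F u v -> ~ exists c, dicolouring2 setT F c.
Proof.
move=> ru rv uv [c Fc]; have := dicolouring2_digon Fc uv.
by rewrite (dicolouring2_star_leaves Fc ru rv) eqxx.
Qed.

Lemma wheel3_no_dicolouring2 F r a b c :
  digon F r a -> digon F r b -> digon F r c -> F a b -> F b c -> F c a ->
  ~ exists col, dicolouring2 setT F col.
Proof.
move=> ra rb rc Fab Fbc Fca [col Fcol]; have := Fcol (col a) [:: a; b; c] isT.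
rewrite /= !inE -(dicolouring2_star_leaves Fcol ra rb).
by rewrite -(dicolouring2_star_leaves Fcol ra rc) eqxx Fab Fbc Fca => /(_ isT).
Qed.

End Dicolourings.

Section Isomorphism.
Variables (T' T : finType) (g : T' -> T) (E' : rel T') (E : rel T).
Hypotheses (g_bij : bijective g) (gE : forall x y, E (g x) (g y) = E' x y).

Lemma proper_subdigraph_preim (V : {set T}) (F : rel T) :
  proper_subdigraph V F E -> proper_subdigraph (g @^-1: V) (relpre g F) E'.
Proof.
have [h _ hK] := g_bij.
case=> [FE VFproper]; split=> [x y /FE | ]; first by rewrite !inE gE.
case: VFproper => [VT | [x [y /andP[Exy nFxy]]]]; [left | right].
  apply: contra_neq VT => /setP gVT; apply/setP=> x.
  by move: (gVT (h x)); rewrite !inE hK.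
by exists (h x), (h y); rewrite /= -gE !hK Exy.
Qed.

Lemma dicritical3_bij : dicritical3 E' -> dicritical3 E.
Proof.
have [h _ hK] := g_bij.
case=> [E'nc E'crit]; split=> [[c Ec] | V F VFproper].
  apply: E'nc; exists (c \o g).
  apply: (dicolouring2_sub _ _ (dicolouring2_preim (g := g) Ec)) => [x | x y].
    by rewrite !inE.
  by rewrite /= gE.
have [c' Fc'] := E'crit _ _ (proper_subdigraph_preim VFproper).
exists (c' \o h).
apply: (dicolouring2_sub _ _ (dicolouring2_preim (g := h) Fc')) => [x | x y].
  by rewrite !inE hK.
by rewrite /= !hK.
Qed.

End Isomorphism.

Lemma proper_subdigraph_sub_remove_arc (T : finType) (V : {set T}) (F E : rel T) :
  (forall x, exists y, E x y) -> proper_subdigraph V F E ->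
  exists x y, E x y /\ subrel F (remove_arc E x y).
Proof.
move=> Eout [FE [VT | [x [y /andP[Exy nFxy]]]]].
  have /subsetPn[v _ vV] : ~~ ([set: T] \subset V) by rewrite subTset.
  have [w Evw] := Eout v; exists v, w; split=> // x y /FE /and3P[xV _ Exy].
  by rewrite /remove_arc Exy; apply: contraNneq vV => -[<- _].
exists x, y; split=> // u v Fuv; have /and3P[_ _ Euv] := FE u v Fuv.
by rewrite /remove_arc Euv; apply: contraNneq nFxy => -[<- <-].
Qed.

Lemma W3_has_out_arc (i : 'I_4) : exists j, W3 i j.
Proof.
exists (if i == ord0 then Ordinal (isT : 1 < 4) else ord0).
by case: i => [[|[|[|[|i]]]] ?].
Qed.

(* In each case the centre [0] has colour [true], together with the other end
   of the removed arc when that arc is a half of a digon; [rk] is a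
   topological order of both colour classes. *)
Lemma W3_remove_arc_dicolouring2 (a b : 'I_4) :
  W3 a b -> exists c, dicolouring2 setT (remove_arc W3 a b) c.
Proof.
move=> Wab; suff [c [rk crk]] : exists (c : 'I_4 -> bool) (rk : 'I_4 -> nat),
    forall i j, remove_arc W3 a b i j -> c i = c j -> rk i < rk j.
  by exists c; apply: (dicolouring2_rank (rk := rk)) => i j _ _; apply: crk.
case: a b Wab => [[|[|[|[|a]]]] ?] // [[|[|[|[|b]]]] ?] // _;
  [ exists (tnth [tuple true; true; false; false]), (tnth [tuple 1; 0; 0; 1])
  | exists (tnth [tuple true; false; true; false]), (tnth [tuple 1; 1; 0; 0])
  | exists (tnth [tuple true; false; false; true]), (tnth [tuple 1; 0; 1; 0])
  | exists (tnth [tuple true; true; false; false]), (tnth [tuple 0; 1; 0; 1])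
  | exists (tnth [tuple true; false; false; false]), (tnth [tuple 0; 2; 0; 1])
  | exists (tnth [tuple true; false; true; false]), (tnth [tuple 0; 1; 1; 0])
  | exists (tnth [tuple true; false; false; false]), (tnth [tuple 0; 1; 2; 0])
  | exists (tnth [tuple true; false; false; true]), (tnth [tuple 0; 0; 1; 1])
  | exists (tnth [tuple true; false; false; false]), (tnth [tuple 0; 1; 2; 3]) ];
  by move=> [[|[|[|[|i]]]] ?] [[|[|[|[|j]]]] ?].
Qed.

Lemma dicritical3_W3 : dicritical3 W3.
Proof.
split.
  exact: (@wheel3_no_dicolouring2 _ _ ord0 (Ordinal (isT : 1 < 4))
            (Ordinal (isT : 2 < 4)) (Ordinal (isT : 3 < 4))).
move=> V F /(proper_subdigraph_sub_remove_arc W3_has_out_arc)[a [b [Wab Fsub]]].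
have [c Wc] := W3_remove_arc_dicolouring2 Wab.
by exists c; apply: dicolouring2_sub Wc => // x; rewrite inE.
Qed.

Section StarInDicritical.
Variables (T : finType) (E : rel T).
Hypotheses (E_loopless : loopless E) (E_crit : dicritical3 E).

Lemma arc_neq x y : E x y -> x != y.
Proof. by apply: contraTneq => ->; apply: E_loopless. Qed.

Lemma dicritical3_induced_full (X : {set T}) :
  ~ (exists c, dicolouring2 setT (induced E X) c) -> X = setT.
Proof.
move=> Xnc; case: (eqVneq X setT) => // XT; case: Xnc.
have [c Xc] := E_crit.2 X (induced E X) (conj (fun x y => id) (or_introl XT)).
by exists c; apply: dicolouring2_induced.
Qed.

Lemma dicritical3_no_bidirected_triangle r u v :
  [set r; u; v] != setT -> digon E r u -> digon E r v -> ~~ digon E u v.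
Proof.
move=> XT ru rv; apply: contra_neqN XT => uv; apply: dicritical3_induced_full.
by apply: (bidirected_triangle_no_dicolouring2 (r := r) (u := u) (v := v));
  rewrite /digon /induced !inE !eqxx ?orbT.
Qed.

Lemma dicritical3_star_not_transitive r s m t :
  digon E r s -> digon E r m -> digon E r t -> E s m -> E m t -> ~~ E s t.
Proof.
move=> rs rm rt Esm Emt; apply/negP=> Est; pose F := remove_arc E s t.
have r_s : r != s by apply: arc_neq; case/andP: rs.
have r_t : r != t by apply: arc_neq; case/andP: rt.
have [c Fc] : exists c, dicolouring2 setT F c.
  apply: E_crit.2; split=> [x y /andP[Exy _] | ]; first by rewrite !inE.
  by right; exists s, t; rewrite /F /remove_arc Est eqxx.
have Fdigon x : digon E r x -> digon F r x.
  case/andP=> Erx Exr; rewrite /digon /F /remove_arc Erx Exr !xpair_eqE.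
  by rewrite (negbTE r_s) (negbTE r_t) andbF.
have Fsm : F s m.
  by rewrite /F /remove_arc Esm xpair_eqE (negbTE (arc_neq Emt)) andbF.
have Fmt : F m t.
  by rewrite /F /remove_arc Emt xpair_eqE eq_sym (negbTE (arc_neq Esm)).
have cm : c m = c s by apply: (dicolouring2_star_leaves Fc); apply: Fdigon.
case: E_crit => + _; apply; exists c => b.
apply: (acyclic_on_shortcut _ (Fc b)) => x y xb _.
case: (eqVneq (x, y) (s, t)) xb => [[-> ->] sb _ | xy _ Exy].
  by right; exists m; first by move: sb; rewrite !inE cm.
by left; rewrite /F /remove_arc Exy xy.
Qed.

Lemma dicritical3_star_leaves_cyclic (E_semi : semicomplete E) r u v w :
  digon E r u -> digon E r v -> digon E r w -> u != w -> v != w ->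
  E u v -> E v w && E w u.
Proof.
move=> ru rv rw u_w v_w Euv.
have [Evw | nEvw] := boolP (E v w).
  have nEuw := dicritical3_star_not_transitive ru rv rw Euv Evw.
  by move: (E_semi u w u_w); rewrite (negbTE nEuw).
have Ewv : E w v by move: (E_semi v w v_w); rewrite (negbTE nEvw).
case/orP: (E_semi u w u_w) => [Euw | Ewu].
  by move: (dicritical3_star_not_transitive ru rw rv Euw Ewv); rewrite Euv.
by move: (dicritical3_star_not_transitive rw ru rv Ewu Euv); rewrite Ewv.
Qed.

Lemma dicritical3_wheel3_iso r a b c :
  digon E r a -> digon E r b -> digon E r c -> E a b -> E b c -> E c a ->
  iso_W3 E.
Proof.
move=> ra rb rc Eab Ebc Eca.
have [/andP[Era Ear] /andP[Erb Ebr] /andP[Erc Ecr]] := And3 ra rb rc.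
have distinct n : uniq (r :: rot n [:: a; b; c]).
  rewrite cons_uniq mem_rot rot_uniq /= !inE !negb_or.
  rewrite (arc_neq Era) (arc_neq Erb) (arc_neq Erc).
  by rewrite (arc_neq Eab) eq_sym (arc_neq Eca) (arc_neq Ebc).
have no_back x y z : digon E r x -> digon E r y -> E x y ->
    uniq [:: r; x; y; z] -> ~~ E y x.
  move=> rx ry Exy; rewrite -[[:: r; x; y; z]]/(rcons [:: r; x; y] z).
  rewrite rcons_uniq => /andP[zn _].
  have := dicritical3_no_bidirected_triangle _ rx ry; rewrite /digon Exy; apply.
  apply: contraNneq zn => XT; have : z \in [set r; x; y] by rewrite XT inE.
  by rewrite !inE -orbA.
have nEba := no_back _ _ _ ra rb Eab (distinct 0).
have nEcb := no_back _ _ _ rb rc Ebc (distinct 1).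
have nEac := no_back _ _ _ rc ra Eca (distinct 2).
pose g := tnth [tuple r; a; b; c].
have g_inj : injective g by apply/tuple_uniqP; exact: (distinct 0).
have gE i j : E (g i) (g j) = W3 i j.
  case: i j => [[|[|[|[|i]]]] ?] // [[|[|[|[|j]]]] ?] //=;
  by rewrite ?(negbTE (E_loopless _)) ?(negbTE nEba) ?(negbTE nEcb) ?(negbTE nEac).
have XT : [set r; a; b; c] = setT.
  apply: dicritical3_induced_full; apply: (@wheel3_no_dicolouring2 _ _ r a b c);
  by rewrite /digon /induced !inE !eqxx ?orbT.
exists g; split=> //; apply: inj_card_bij g_inj _.
rewrite card_ord; apply: leq_trans (card_size [:: r; a; b; c]).
by rewrite -cardsT -XT; apply/eq_leq/eq_card => x; rewrite !inE -!orbA.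
Qed.

End StarInDicritical.

Theorem lemma20 (T : finType) (E : rel T) :
  loopless E -> semicomplete E -> contains_S4 E ->
  (dicritical3 E <-> iso_W3 E).
Proof.
move=> E_loopless E_semi [f [f_inj f_star]].
split=> [E_crit | [g [g_bij gE]]]; last first.
  exact: dicritical3_bij g_bij gE dicritical3_W3.
pose o1 := Ordinal (isT : 1 < 4); pose o2 := Ordinal (isT : 2 < 4).
pose o3 := Ordinal (isT : 3 < 4).
have [r1 r2 r3] := And3 (f_star o1 isT) (f_star o2 isT) (f_star o3 isT).
have f_neq i j : i != j -> f i != f j by rewrite (inj_eq f_inj).
have cyclic := dicritical3_star_leaves_cyclic E_loopless E_crit E_semi.
have wheel := dicritical3_wheel3_iso E_loopless E_crit.
case/orP: (E_semi _ _ (f_neq o1 o2 isT)) => [E12 | E21].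
  have /andP[E23 E31] :=
    cyclic _ _ _ _ r1 r2 r3 (f_neq o1 o3 isT) (f_neq o2 o3 isT) E12.
  exact: wheel r1 r2 r3 E12 E23 E31.
have /andP[E13 E32] :=
  cyclic _ _ _ _ r2 r1 r3 (f_neq o2 o3 isT) (f_neq o1 o3 isT) E21.
exact: wheel r2 r1 r3 E21 E13 E32.
Qed.
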